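(* Let $F$ be a commutative field, let $n\ge 1$ and $0\le k\le n-1$, and let $\chi:\Gamma(n,k,F)\to \mathrm{PG}(n,F)^*$ be a linear mapping satisfying the null property: $U\subseteq U^\chi$ for each $U\in\mathbb D(\chi)$. Then $\chi$ is a (generalised) polarity, i.e. for all $k$-subspaces $U_1,U_2$ that are collinear in $\Gamma(n,k,F)$, $U_1\subseteq U_2^\chi$ implies $U_2\subseteq U_1^\chi$, where for an exceptional $U\in\mathbb A(\chi)$ one sets $U^\chi$ to be the whole space $\mathrm{PG}(n,F)$.
   Context: $\mathrm{PG}(n,F)$ is the $n$-dimensional projective space over $F$; a $d$-subspace is a projective subspace of dimension $d$. For subspaces $U\subseteq W$, $[U,W]_d$ is the set of $d$-subspaces $X$ with $U\subseteq X\subseteq W$. The Grassmannian $\Gamma(n,k,F)$ is the semilinear space whose points (G-points) are the $k$-subspaces of $\mathrm{PG}(n,F)$ and whose lines (G-lines) are the pencils $[U,W]_k$ with $\dim U=k-1$, $\dim W=k+1$; two G-points are collinear if some G-line contains both (for $k=0$ this is $\mathrm{PG}(n,F)$ itself). $\mathrm{PG}(n,F)^*$ is the dual projective space (points are hyperplanes, lines are pencils of hyperplanes through an $(n-2)$-subspace). A partial map $\chi$ from a set $\mathcal P$ to $\mathcal P'$ is a map defined on a subset $\mathbb D(\chi)$ (domain); $\mathbb A(\chi)=\mathcal P\setminus\mathbb D(\chi)$ is the exceptional set; for a subset $\phi$, $\phi^\chi=\{X^\chi: X\in\phi\cap\mathbb D(\chi)\}$. A partial map between semilinear spaces is a linear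 mapping if for each line $\ell$ exactly one of the following holds: (i) $\ell^\chi$ is a line and $\chi$ maps $\ell$ bijectively onto $\ell^\chi$; (ii) $\ell^\chi$ is a single point and $|\ell\cap\mathbb A(\chi)|=1$; (iii) $\ell\subseteq\mathbb A(\chi)$. *)

(* PG(n,F) is modelled by the vector space F^(n+1) = 'rV[F]_(n.+1);
   a projective d-subspace is a vector subspace of (vector) dimension d+1. *)
From HB Require Import structures.
From mathcomp Require Import all_boot all_order all_algebra.
Set Implicit Arguments. Unset Strict Implicit. Unset Printing Implicit Defensive.
Import GRing.Theory.
Local Open Scope ring_scope.

Section PG.
Variables (F : fieldType) (n : nat).
Local Notation V := 'rV[F]_(n.+1).

Definition proj_sub (d : nat) (X : {vspace V}) : Prop := \dim X = d.+1.

Definition gpoint (k : nat) (X : {vspace V}) : Prop := \dim X = k.+1.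

(* The pencil [U,W]_k as a predicate; it is a G-line when U is a projective
   (k-1)-subspace (vector dim k) and W a projective (k+1)-subspace (vector dim k+2). *)
Definition pencil (k : nat) (U W X : {vspace V}) : Prop :=
  \dim X = k.+1 /\ (U <= X)%VS /\ (X <= W)%VS.

Definition is_gline_data (k : nat) (U W : {vspace V}) : Prop :=
  \dim U = k /\ \dim W = k.+2 /\ (U <= W)%VS.

Definition gcollinear (k : nat) (U1 U2 : {vspace V}) : Prop :=
  exists U W, is_gline_data k U W /\ pencil k U W U1 /\ pencil k U W U2.

(* points of the dual space PG(n,F)^*: hyperplanes (vector dim n) *)
Definition hyperplane (H : {vspace V}) : Prop := \dim H = n.

(* lines of PG(n,F)^*: hyperplanes through a projective (n-2)-subspace S *)
Definition dual_line (S : {vspace V}) (H : {vspace V}) : Prop :=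
  hyperplane H /\ (S <= H)%VS.

(* A partial map chi : Gamma(n,k,F) -> PG(n,F)^* is a function returning
   [None] on the exceptional set A(chi) and [Some H] on the domain D(chi). *)
Definition partial_map := {vspace V} -> option {vspace V}.

Definition image_set (chi : partial_map) (l : {vspace V} -> Prop) (H : {vspace V}) : Prop :=
  exists X, l X /\ chi X = Some H.

Definition exactly_one3 (P Q R : Prop) : Prop :=
  (P /\ ~ Q /\ ~ R) \/ (~ P /\ Q /\ ~ R) \/ (~ P /\ ~ Q /\ R).

Definition lin_case_i (chi : partial_map) (l : {vspace V} -> Prop) : Prop :=
  (exists S, \dim S = n.-1 /\ forall H, image_set chi l H <-> dual_line S H) /\
  (forall X, l X -> chi X <> None) /\
  (forall X Y, l X -> l Y -> chi X = chi Y -> X = Y).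

Definition lin_case_ii (chi : partial_map) (l : {vspace V} -> Prop) : Prop :=
  (exists H0, forall H, image_set chi l H <-> H = H0) /\
  (exists X0, l X0 /\ chi X0 = None /\ forall Y, l Y -> chi Y = None -> Y = X0).

Definition lin_case_iii (chi : partial_map) (l : {vspace V} -> Prop) : Prop :=
  forall X, l X -> chi X = None.

Definition partial_map_G_to_dual (k : nat) (chi : partial_map) : Prop :=
  forall X H, chi X = Some H -> gpoint k X /\ hyperplane H.

Definition linear_mapping (k : nat) (chi : partial_map) : Prop :=
  partial_map_G_to_dual k chi /\
  forall U W, is_gline_data k U W ->
    exactly_one3 (lin_case_i chi (pencil k U W)) (lin_case_ii chi (pencil k U W))
                 (lin_case_iii chi (pencil k U W)).

Definition null_property (chi : partial_map) : Prop :=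
  forall U H, chi U = Some H -> (U <= H)%VS.

Definition ext_image (chi : partial_map) (U : {vspace V}) : {vspace V} :=
  match chi U with Some H => H | None => fullv end.

Definition gen_polarity (k : nat) (chi : partial_map) : Prop :=
  forall U1 U2, gpoint k U1 -> gpoint k U2 -> gcollinear k U1 U2 ->
    (U1 <= ext_image chi U2)%VS -> (U2 <= ext_image chi U1)%VS.

End PG.

(* Let U1 != U2 lie on a G-line [U,W]_k with U1 <= U2^chi. Two distinct points
   of a pencil span W, and every pencil has a third point X3. If chi is
   constant (= H0) off a single exceptional point of the line, then either
   U2 <= H0 by the null property, or U2 is that exceptional point and H0
   contains U1 + X3 = W. If chi maps the line bijectively onto the hyperplanes
   through S, then U1 <= U1^chi :&: U2^chi = S, so X3^chi contains U1 and X3,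
   hence W; thus U2 <= U2^chi :&: X3^chi = S <= U1^chi. *)
From mathcomp Require Import all_boot all_order all_algebra.
From mathcomp Require Import zify.
Set Implicit Arguments. Unset Strict Implicit. Unset Printing Implicit Defensive.
Import GRing.Theory.
Local Open Scope ring_scope.

Section Subspaces.
Variables (F : fieldType) (n : nat).
Local Notation V := 'rV[F]_(n.+1).

Lemma subv_eq_dim (A B : {vspace V}) :
  (A <= B)%VS -> (\dim B <= \dim A)%N -> A = B.
Proof. by move=> AB dBA; apply/eqP; rewrite eqEdim AB. Qed.

Lemma nsubv_eq_dim (A B : {vspace V}) :
  \dim A = \dim B -> A <> B -> ~~ (A <= B)%VS.
Proof.
by move=> dAB neqAB; apply/negP => AB; apply: neqAB; apply: subv_eq_dim; rewrite ?dAB.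
Qed.

Lemma dim_addv_line (U : {vspace V}) (w : V) :
  w \notin U -> \dim (U + <[w]>)%VS = (\dim U).+1.
Proof.
move=> wU; have w0 : w != 0 by apply: contraNneq wU => ->; apply: mem0v.
have capU : (U :&: <[w]>)%VS = 0%VS.
  apply/eqP; rewrite -subv0; apply/subvP => x /memv_capP[xU /vlineP[a xa]].
  rewrite memv0; apply: contraNT wU => x0.
  have a0 : a != 0 by apply: contraNneq x0 => a0; rewrite xa a0 scale0r.
  by rewrite -[w](scalerK a0) -xa memvZ.
by have := dimv_sum_cap U <[w]>; rewrite capU dimv0 dim_vline w0; lia.
Qed.

Lemma hyperplanes_cap (H H' S : {vspace V}) :
  \dim H = n -> \dim H' = n -> H <> H' -> \dim S = n.-1 ->
  (S <= H)%VS -> (S <= H')%VS -> (H :&: H')%VS = S.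
Proof.
move=> dH dH' neqH dS SH SH'.
have HH' : ~~ (H' <= H)%VS by rewrite nsubv_eq_dim ?dH ?dH' //; apply: nesym.
have dsum : \dim (H + H')%VS = n.+1.
  have := dimv_leqif_sup (addvSl H H'); rewrite subv_add subvv (negbTE HH') dH => /ltn_leqif.
  by have := dimvS (subvf (H + H')%VS); rewrite dimvf /dim /= mul1n; lia.
symmetry; apply: subv_eq_dim; first by rewrite subv_cap SH SH'.
by have := dimv_sum_cap H H'; rewrite dsum dH dH' dS; lia.
Qed.

Section Pencil.
Variables (k : nat) (U W : {vspace V}).
Hypothesis gline : is_gline_data k U W.

Lemma pencil_addv (X Y : {vspace V}) :
  pencil k U W X -> pencil k U W Y -> X <> Y -> (X + Y)%VS = W.
Proof.
move: gline => [dU [dW _]] [dX [UX XW]] [dY [UY YW]] neqXY.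
have XY : ~~ (X <= Y)%VS by rewrite nsubv_eq_dim ?dX ?dY.
have dcap : \dim (X :&: Y)%VS = k.
  have UXY : (U <= X :&: Y)%VS by rewrite subv_cap UX UY.
  have := dimv_leqif_sup (capvSl X Y); rewrite subv_cap subvv (negbTE XY) dX => /ltn_leqif.
  by have := dimvS UXY; rewrite dU; lia.
apply: subv_eq_dim; first by rewrite subv_add XW YW.
by have := dimv_sum_cap X Y; rewrite dcap dX dY dW; lia.
Qed.

Lemma pencil_span_sub (X Y H : {vspace V}) :
  pencil k U W X -> pencil k U W Y -> X <> Y ->
  (X <= H)%VS -> (Y <= H)%VS -> (W <= H)%VS.
Proof. by move=> pX pY neqXY XH YH; rewrite -(pencil_addv pX pY neqXY) subv_add XH YH. Qed.

(* For u in X \ Y and v in Y \ X, the point U + <[u + v]> differs from both. *)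
Lemma pencil_third_point (X Y : {vspace V}) :
  pencil k U W X -> pencil k U W Y -> X <> Y ->
  exists Z, [/\ pencil k U W Z, Z <> X & Z <> Y].
Proof.
move: gline => [dU _] [dX [UX XW]] [dY [UY YW]] neqXY.
have /subvPn [u uX uY] : ~~ (X <= Y)%VS by rewrite nsubv_eq_dim ?dX ?dY.
have /subvPn [v vY vX] : ~~ (Y <= X)%VS by rewrite nsubv_eq_dim ?dX ?dY //; apply: nesym.
have uvU : u + v \notin U.
  by apply: contra uY => uvU; rewrite -(addrK v u); apply: memvB => //; apply: (subvP UY).
have uvZ : u + v \in (U + <[u + v]>)%VS := subvP (addvSr _ _) _ (memv_line _).
exists (U + <[u + v]>)%VS; split.
- split; first by rewrite dim_addv_line // dU.
  split; first exact: addvSl.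
  rewrite subv_add (subv_trans UX XW) -memvE.
  by apply: memvD; [apply: (subvP XW) | apply: (subvP YW)].
- move=> ZX; rewrite ZX in uvZ; apply: (negP vX).
  by rewrite -(addKr u v); apply: memvD; rewrite ?memvN.
- move=> ZY; rewrite ZY in uvZ; apply: (negP uY).
  by rewrite -(addrK v u); apply: memvB.
Qed.

End Pencil.
End Subspaces.

Section LinearMapping.
Variables (F : fieldType) (n k : nat) (chi : partial_map F n).
Local Notation V := 'rV[F]_(n.+1).
Hypotheses (chi_dual : partial_map_G_to_dual k chi) (chi_null : null_property chi).
Variables (U W : {vspace V}).
Hypothesis gline : is_gline_data k U W.
Local Notation line := (pencil k U W).

Lemma polar_constant_line (U1 U2 : {vspace V}) :
  lin_case_ii chi line -> line U1 -> line U2 -> U1 <> U2 ->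
  (U2 <= ext_image chi U1)%VS.
Proof.
move=> [[H0 imH0] [X0 [_ [_ X0_uniq]]]] l1 l2 neq12; rewrite /ext_image.
have sub_H0 X H : line X -> chi X = Some H -> (X <= H0)%VS.
  move=> lX EX; have <- : H = H0 by apply/imH0; exists X.
  exact: chi_null EX.
case E1: (chi U1) => [H1|]; last exact: subvf.
have -> : H1 = H0 by apply/imH0; exists U1.
case E2: (chi U2) => [H2|]; first exact: sub_H0 l2 E2.
have [X3 [l3 neq31 neq32]] := pencil_third_point gline l1 l2 neq12.
case E3: (chi X3) => [H3|]; last by rewrite (X0_uniq _ l3 E3) -(X0_uniq _ l2 E2) in neq32.
have WH0 := pencil_span_sub gline l1 l3 (nesym neq31) (sub_H0 _ _ l1 E1) (sub_H0 _ _ l3 E3).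
by case: l2 => _ [_ U2W]; exact: subv_trans U2W WH0.
Qed.

Lemma polar_bijective_line (U1 U2 H1 H2 : {vspace V}) :
  lin_case_i chi line -> line U1 -> line U2 -> U1 <> U2 ->
  chi U1 = Some H1 -> chi U2 = Some H2 -> (U1 <= H2)%VS -> (U2 <= H1)%VS.
Proof.
move=> [[S [dS imS]] [defined inj]] l1 l2 neq12 E1 E2 U1H2.
have S_sub X H : line X -> chi X = Some H -> (S <= H)%VS.
  by move=> lX EX; have [_] := (imS H).1 (ex_intro _ X (conj lX EX)).
have dimH X H : chi X = Some H -> \dim H = n by move=> /chi_dual[].
have neqH X Y H H' : line X -> line Y -> X <> Y -> chi X = Some H -> chi Y = Some H' ->
    H <> H'.
  by move=> lX lY neqXY EX EY eqH; apply: neqXY; apply: inj => //; rewrite EX EY eqH.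
have capS X Y H H' : line X -> line Y -> X <> Y -> chi X = Some H -> chi Y = Some H' ->
    (H :&: H')%VS = S.
  move=> lX lY neqXY EX EY.
  by apply: hyperplanes_cap (dimH _ _ EX) (dimH _ _ EY) (neqH _ _ _ _ lX lY neqXY EX EY)
    dS (S_sub _ _ lX EX) (S_sub _ _ lY EY).
have U1S : (U1 <= S)%VS.
  by rewrite -(capS _ _ _ _ l1 l2 neq12 E1 E2) subv_cap U1H2 (chi_null E1).
have [X3 [l3 neq31 neq32]] := pencil_third_point gline l1 l2 neq12.
case E3: (chi X3) => [H3|]; last by have := defined _ l3; rewrite E3.
have U1H3 : (U1 <= H3)%VS := subv_trans U1S (S_sub _ _ l3 E3).
have WH3 : (W <= H3)%VS := pencil_span_sub gline l1 l3 (nesym neq31) U1H3 (chi_null E3).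
have U2H3 : (U2 <= H3)%VS by case: l2 => _ [_ U2W]; exact: subv_trans U2W WH3.
apply: subv_trans (S_sub _ _ l1 E1).
by rewrite -(capS _ _ _ _ l2 l3 (nesym neq32) E2 E3) subv_cap (chi_null E2) U2H3.
Qed.

End LinearMapping.

Theorem theorem5p1 (F : fieldType) (n k : nat) (chi : partial_map F n) :
  (1 <= n)%N -> (k <= n.-1)%N ->
  linear_mapping k chi -> null_property chi ->
  gen_polarity k chi.
Proof.
move=> _ _ [chi_dual chi_lin] chi_null U1 U2 _ _ [U [W [gline [l1 l2]]]].
case: (eqVneq U1 U2) => [<- //| /eqP neq12 U1U2].
have [[case_i _]|[[_ [case_ii _]]|[_ [_ case_iii]]]] := chi_lin U W gline.
- move: U1U2; rewrite /ext_image.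
  case E1: (chi U1) => [H1|]; last by rewrite subvf.
  case E2: (chi U2) => [H2|]; last by have [_ [defined _]] := case_i; have := defined _ l2.
  exact: (polar_bijective_line chi_dual chi_null gline case_i l1 l2 neq12 E1 E2).
- exact: (polar_constant_line chi_null gline case_ii l1 l2 neq12).
- by rewrite /ext_image case_iii ?subvf.
Qed.
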